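(* Fix $2\le d\le7$. There exists $c_d$ with $0<c_g<c_d$ such that for all $0\le c<c_d$: both $x\mapsto\mathsf i(c,x)$ and $x\mapsto\mathsf j(c,x)$ have unique fixed points $a_c,b_c$ in $(0,1)$; $|\partial\mathsf i(c,x)/\partial x|<1$ and $|\partial\mathsf j(c,x)/\partial x|<1$ for $x\in[0,1]$; for any $x\in[0,1]$ the iterates of $\mathsf i(c,\cdot)$ from $x$ converge to $a_c$ and the iterates of $\mathsf j(c,\cdot)$ from $x$ converge to $b_c$; and $\mathsf i(c,x)>x$ if and only if $x\in[0,a_c)$, while $\mathsf j(c,x)>x$ if and only if $x\in[0,b_c)$ (for $x\in[0,1]$).
   Context: $f(\alpha,x):=\big(\frac{1+\alpha x}{1+2x}\big)^d$ for $1\le\alpha<2$, $0\le x\le1$. $\mathsf i(c,x):=f(1,f(1+c,x))$ and $\mathsf j(c,x):=f(1+c,f(1,x))$. $g(b,x):=b^d\big(\frac{1+x+x^2}{1+b+bx}\big)^d$, and $c_g$ denotes the unique fixed point in $(0,1)$ of $x\mapsto g(1,x)$. *)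

From Stdlib Require Import Reals Lra ClassicalEpsilon.
From Coquelicot Require Import Coquelicot.
Open Scope R_scope.

Definition f (d : nat) (alpha x : R) : R := ((1 + alpha * x) / (1 + 2 * x)) ^ d.

Definition fi (d : nat) (c x : R) : R := f d 1 (f d (1 + c) x).
Definition fj (d : nat) (c x : R) : R := f d (1 + c) (f d 1 x).

Definition g (d : nat) (b x : R) : R :=
  b ^ d * ((1 + x + x ^ 2) / (1 + b + b * x)) ^ d.

Definition c_g (d : nat) : R :=
  epsilon (inhabits 0) (fun x => 0 < x < 1 /\ g d 1 x = x).

From Stdlib Require Import Reals Lra Lia QArith Qreals ClassicalEpsilon.
From Coquelicot Require Import Coquelicot.
Open Scope R_scope.

(** The maps [i(c,.)] and [j(c,.)] are compositions [f(a, f(b, .))] with [a, b] in [[1,2)],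
    so they map [[0,1]] into itself with [F 0 > 0] and [F 1 < 1]; all claims then follow from
    the contraction principle on [[0,1]] once [|F'| <= 99/100] there, uniformly in
    [c] in [[0, c_d]]. By the chain rule [F'] is a product of two values of
    [d/dx f(a, x) = d u^(d-1) (a - 2) / (1 + 2x)^2] with [u = (1 + a x)/(1 + 2x)], whose
    absolute value increases with [a] through [u], decreases with [a] through [2 - a] and
    decreases with [x]; on a box of [(c, x)] it is therefore bounded by a corner expression,
    and a bisection in exact rational arithmetic certifies the bound for each [d].
    The same bisection shows [g(1,x) < x] on [[c_d, x_0]] and [d/dx g(1,x) > 1] on [[x_0, 1]];
    since [g(1,1) = 1], every fixed point of [g(1,.)] in [(0,1)] lies below [c_d], and one
    exists in [(0, x_0)] by the intermediate value theorem. *)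

Lemma continuity_pt_of_is_derive (F : R -> R) x l :
  is_derive F x l -> continuity_pt F x.
Proof.
  intros H. apply continuity_pt_filterlim, (ex_derive_continuous F x). now exists l.
Qed.

(** * Contraction on an interval *)

Section ContractionOnInterval.

Variables (F : R -> R) (lo hi K : R).
Hypothesis lo_lt_hi : lo < hi.
Hypothesis K_range : 0 <= K < 1.
Hypothesis F_maps_into : forall x, lo <= x <= hi -> lo <= F x <= hi.
Hypothesis F_lo : lo < F lo.
Hypothesis F_hi : F hi < hi.
Hypothesis F_derive_le :
  forall x, lo <= x <= hi -> exists l, is_derive F x l /\ Rabs l <= K.

Lemma contraction_lipschitz x y : lo <= x <= hi -> lo <= y <= hi ->
  Rabs (F y - F x) <= K * Rabs (y - x).
Proof.
  intros Hx Hy.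
  assert (Hin : forall t, Rmin x y <= t <= Rmax x y -> lo <= t <= hi).
  { intros t Ht. split.
    - apply Rle_trans with (Rmin x y); [apply Rmin_glb|]; lra.
    - apply Rle_trans with (Rmax x y); [|apply Rmax_lub]; lra. }
  assert (HD : forall t, lo <= t <= hi ->
            is_derive F t (Derive F t) /\ Rabs (Derive F t) <= K).
  { intros t Ht. destruct (F_derive_le t Ht) as [l [Hl HlK]].
    now rewrite (is_derive_unique F t l Hl). }
  destruct (MVT_gen F x y (Derive F)) as [t [Ht ->]].
  - intros t Ht. apply HD, Hin. lra.
  - intros t Ht. apply (continuity_pt_of_is_derive F t (Derive F t)), HD, Hin. lra.
  - rewrite Rabs_mult. apply Rmult_le_compat_r; [apply Rabs_pos|]. apply HD, Hin, Ht.
Qed.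

Lemma contraction_fixed_point : exists a, lo < a < hi /\ F a = a.
Proof.
  destruct (Ranalysis5.IVT_interv (fun x => x - F x) lo hi) as [a [Ha Fa]];
    [|lra|lra|lra|].
  - intros t Ht. apply continuity_pt_minus.
    + apply derivable_continuous_pt, derivable_pt_id.
    + destruct (F_derive_le t Ht) as [l [Hl _]].
      exact (continuity_pt_of_is_derive F t l Hl).
  - exists a. assert (a <> lo) by (intros ->; lra).
    assert (a <> hi) by (intros ->; lra). split; lra.
Qed.

Lemma contraction_fixed_point_unique a y : lo <= a <= hi -> lo <= y <= hi ->
  F a = a -> F y = y -> y = a.
Proof.
  intros Ha Hy Fa Fy. pose proof (contraction_lipschitz a y Ha Hy) as H.
  rewrite Fa, Fy in H. pose proof (Rabs_pos (y - a)).
  assert (Hdist : Rabs (y - a) = 0) by nra. apply Rabs_eq_0 in Hdist. lra.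
Qed.

Lemma contraction_iter_dist a x n : lo <= a <= hi -> F a = a -> lo <= x <= hi ->
  lo <= Nat.iter n F x <= hi /\ Rabs (Nat.iter n F x - a) <= K ^ n * Rabs (x - a).
Proof.
  intros Ha Fa Hx. induction n as [|n [IHin IHdist]]; simpl.
  - split; [exact Hx | lra].
  - split; [now apply F_maps_into|].
    pose proof (contraction_lipschitz a _ Ha IHin) as H. rewrite Fa in H.
    apply (Rle_trans _ _ _ H). rewrite Rmult_assoc. apply Rmult_le_compat_l; lra.
Qed.

Lemma contraction_iter_cvg a x : lo <= a <= hi -> F a = a -> lo <= x <= hi ->
  is_lim_seq (fun n => Nat.iter n F x) a.
Proof.
  intros Ha Fa Hx.
  assert (Hdiff : is_lim_seq (fun n => Nat.iter n F x - a) 0).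
  { apply is_lim_seq_abs_0,
      (is_lim_seq_le_le (fun _ => 0) _ (fun n => K ^ n * Rabs (x - a))).
    - intros n. split; [apply Rabs_pos | now apply contraction_iter_dist].
    - apply is_lim_seq_const.
    - rewrite <- (Rmult_0_l (Rabs (x - a))).
      apply is_lim_seq_mult'; [|apply is_lim_seq_const].
      apply is_lim_seq_geom. rewrite Rabs_pos_eq; lra. }
  pose proof (is_lim_seq_plus' _ _ 0 a Hdiff (is_lim_seq_const a)) as H.
  rewrite Rplus_0_l in H. revert H. apply is_lim_seq_ext. intros n. ring.
Qed.

Lemma contraction_gt_id_iff a x : lo <= a <= hi -> F a = a -> lo <= x <= hi ->
  (F x > x <-> lo <= x < a).
Proof.
  intros Ha Fa Hx. pose proof (contraction_lipschitz a x Ha Hx) as H.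
  rewrite Fa in H. apply Rabs_le_between' in H.
  destruct (Rtotal_order x a) as [Hlt|[->|Hgt]].
  - rewrite Rabs_left in H by lra. split; intros; nra.
  - lra.
  - rewrite Rabs_pos_eq in H by lra. split; intros; nra.
Qed.

Theorem contraction_interval :
  exists a, (lo < a < hi /\ F a = a /\ forall y, lo < y < hi -> F y = y -> y = a) /\
    (forall x, lo <= x <= hi -> is_lim_seq (fun n => Nat.iter n F x) a) /\
    (forall x, lo <= x <= hi -> (F x > x <-> lo <= x < a)).
Proof.
  destruct contraction_fixed_point as [a [Ha Fa]].
  exists a. split; [|split].
  - split; [exact Ha|split; [exact Fa|]].
    intros y Hy Fy. apply contraction_fixed_point_unique; lra.
  - intros x Hx. apply contraction_iter_cvg; lra.
  - intros x Hx. apply contraction_gt_id_iff; lra.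
Qed.

End ContractionOnInterval.

(** * The maps [f(a,.)] and their compositions *)

Lemma Rdiv_le_cross a b c e : 0 < b -> 0 < e -> a * e <= c * b -> a / b <= c / e.
Proof.
  intros Hb He H. apply (Rmult_le_reg_r (b * e)); [nra|].
  replace (a / b * (b * e)) with (a * e) by (field; lra).
  replace (c / e * (b * e)) with (c * b) by (field; lra). exact H.
Qed.

Definition fbase (alpha x : R) : R := (1 + alpha * x) / (1 + 2 * x).

Lemma f_fbase d alpha x : f d alpha x = fbase alpha x ^ d.
Proof. reflexivity. Qed.

Lemma fbase_pos alpha x : 0 <= alpha -> 0 <= x -> 0 < fbase alpha x.
Proof. intros. unfold fbase. apply Rdiv_lt_0_compat; nra. Qed.

Lemma fbase_le_1 alpha x : alpha <= 2 -> 0 <= x -> fbase alpha x <= 1.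
Proof. intros. unfold fbase. rewrite <- (Rdiv_1_r 1) at 3. apply Rdiv_le_cross; nra. Qed.

Lemma fbase_lt_1 alpha x : alpha < 2 -> 0 < x -> fbase alpha x < 1.
Proof. intros. unfold fbase. apply Rlt_div_l; nra. Qed.

Lemma fbase_le_alpha a1 a2 x : a1 <= a2 -> 0 <= x -> fbase a1 x <= fbase a2 x.
Proof. intros. unfold fbase. apply Rdiv_le_cross; nra. Qed.

Lemma fbase_anti_x alpha x1 x2 : alpha <= 2 -> 0 <= x1 <= x2 ->
  fbase alpha x2 <= fbase alpha x1.
Proof. intros. unfold fbase. apply Rdiv_le_cross; nra. Qed.

Lemma f_pos d alpha x : 0 <= alpha -> 0 <= x -> 0 < f d alpha x.
Proof. intros. rewrite f_fbase. now apply pow_lt, fbase_pos. Qed.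

Lemma f_le_1 d alpha x : 0 <= alpha <= 2 -> 0 <= x -> f d alpha x <= 1.
Proof.
  intros. rewrite f_fbase, <- (pow1 d).
  apply pow_incr. split; [left; apply fbase_pos|apply fbase_le_1]; lra.
Qed.

Lemma f_lt_1 d alpha x : (0 < d)%nat -> 0 <= alpha < 2 -> 0 < x -> f d alpha x < 1.
Proof.
  intros. rewrite f_fbase.
  apply pow_lt_1_compat; [split; [left; apply fbase_pos|apply fbase_lt_1]; lra|lia].
Qed.

Definition f_slope (d : nat) (alpha x : R) : R :=
  INR d * fbase alpha x ^ pred d * ((alpha - 2) / (1 + 2 * x) ^ 2).

Lemma is_derive_f d alpha x : 0 <= x -> is_derive (f d alpha) x (f_slope d alpha x).
Proof.
  intros Hx. unfold f, f_slope, fbase. auto_derive; [lra|].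
  unfold Rdiv. set (p := ((1 + alpha * x) * / (1 + 2 * x)) ^ pred d). field. lra.
Qed.

Definition slope_bound (d : nat) (aL aU xL : R) : R :=
  INR d * fbase aU xL ^ pred d * ((2 - aL) / (1 + 2 * xL) ^ 2).

Lemma Rabs_f_slope_le d alpha aL aU x xL :
  0 <= aL <= alpha -> alpha <= aU <= 2 -> 0 <= xL <= x ->
  Rabs (f_slope d alpha x) <= slope_bound d aL aU xL.
Proof.
  intros Ha HaU Hx. unfold f_slope, slope_bound.
  assert (Hfactor : Rabs ((alpha - 2) / (1 + 2 * x) ^ 2) = (2 - alpha) / (1 + 2 * x) ^ 2).
  { rewrite Rabs_div, Rabs_left1, (Rabs_pos_eq ((1 + 2 * x) ^ 2)) by nra. field. nra. }
  rewrite !Rabs_mult, Hfactor, (Rabs_pos_eq (INR d)) by apply pos_INR.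
  rewrite Rabs_pos_eq by (apply pow_le; left; apply fbase_pos; lra).
  apply Rmult_le_compat.
  - apply Rmult_le_pos; [apply pos_INR|]. apply pow_le. left; apply fbase_pos; lra.
  - apply Rdiv_le_0_compat; nra.
  - apply Rmult_le_compat_l; [apply pos_INR|]. apply pow_incr.
    split; [left; apply fbase_pos; lra|].
    apply Rle_trans with (fbase aU x); [apply fbase_le_alpha|apply fbase_anti_x]; lra.
  - apply Rdiv_le_cross; try nra. apply Rmult_le_compat; nra.
Qed.

Definition fcomp (d : nat) (a b x : R) : R := f d a (f d b x).

Definition fcomp_slope (d : nat) (a b x : R) : R :=
  f_slope d a (f d b x) * f_slope d b x.

Lemma is_derive_fcomp d a b x : 0 <= b -> 0 <= x ->
  is_derive (fcomp d a b) x (fcomp_slope d a b x).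
Proof.
  intros Hb Hx. unfold fcomp_slope. rewrite Rmult_comm.
  apply (is_derive_comp (f d a) (f d b)); apply is_derive_f;
    [left; now apply f_pos | exact Hx].
Qed.

(* The inner value [f d b x] is smallest at [b = bL], [x = xU]. *)
Definition fcomp_slope_bound (d : nat) (aL aU bL bU xL xU : R) : R :=
  slope_bound d aL aU (fbase bL xU ^ d) * slope_bound d bL bU xL.

Lemma Rabs_fcomp_slope_le d a aL aU b bL bU x xL xU :
  0 <= aL <= a -> a <= aU <= 2 -> 0 <= bL <= b -> b <= bU <= 2 -> 0 <= xL <= x -> x <= xU ->
  Rabs (fcomp_slope d a b x) <= fcomp_slope_bound d aL aU bL bU xL xU.
Proof.
  intros. unfold fcomp_slope, fcomp_slope_bound. rewrite Rabs_mult.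
  apply Rmult_le_compat; try apply Rabs_pos; apply Rabs_f_slope_le; try lra.
  split; [apply pow_le; left; apply fbase_pos; lra|].
  rewrite f_fbase. apply pow_incr. split; [left; apply fbase_pos; lra|].
  apply Rle_trans with (fbase b xU); [apply fbase_le_alpha|apply fbase_anti_x]; lra.
Qed.

Lemma fcomp_contraction d a b K : (0 < d)%nat -> 0 <= a < 2 -> 0 <= b <= 2 -> 0 <= K < 1 ->
  (forall x, 0 <= x <= 1 -> Rabs (fcomp_slope d a b x) <= K) ->
  exists p, (0 < p < 1 /\ fcomp d a b p = p /\
             forall y, 0 < y < 1 -> fcomp d a b y = y -> y = p) /\
    (forall x, 0 <= x <= 1 -> exists l, is_derive (fcomp d a b) x l /\ Rabs l < 1) /\
    (forall x, 0 <= x <= 1 -> is_lim_seq (fun n => Nat.iter n (fcomp d a b) x) p) /\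
    (forall x, 0 <= x <= 1 -> (fcomp d a b x > x <-> 0 <= x < p)).
Proof.
  intros Hd Ha Hb HK Hslope.
  assert (Hderive : forall x, 0 <= x <= 1 ->
            exists l, is_derive (fcomp d a b) x l /\ Rabs l <= K).
  { intros x Hx. exists (fcomp_slope d a b x).
    split; [apply is_derive_fcomp|apply Hslope]; lra. }
  assert (Hinner : forall x, 0 <= x -> 0 < f d b x) by (intros; apply f_pos; lra).
  assert (Hmaps : forall x, 0 <= x <= 1 -> 0 <= fcomp d a b x <= 1).
  { intros x Hx. specialize (Hinner x ltac:(lra)).
    split; [left; apply f_pos|apply f_le_1]; lra. }
  assert (Hat0 : 0 < fcomp d a b 0) by (apply f_pos; [|left; apply Hinner]; lra).
  assert (Hat1 : fcomp d a b 1 < 1) by (apply f_lt_1; [exact Hd|lra|apply Hinner; lra]).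
  destruct (contraction_interval (fcomp d a b) 0 1 K ltac:(lra) HK Hmaps Hat0 Hat1 Hderive)
    as (p & Hfix & Hcvg & Hsign).
  exists p. split; [exact Hfix|split; [|split; [exact Hcvg|exact Hsign]]].
  intros x Hx. destruct (Hderive x Hx) as [l [Hl HlK]]. exists l. split; [exact Hl|lra].
Qed.

(** * The fixed point [c_g] *)

Definition gbase (x : R) : R := (1 + x + x ^ 2) / (2 + x).

Lemma g_one d x : g d 1 x = gbase x ^ d.
Proof. unfold g, gbase. rewrite pow1, Rmult_1_l. do 3 f_equal. ring. Qed.

Definition g_slope (d : nat) (x : R) : R :=
  INR d * gbase x ^ pred d * ((1 + 4 * x + x ^ 2) / (2 + x) ^ 2).

Lemma is_derive_g_one d x : 0 <= x -> is_derive (g d 1) x (g_slope d x).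
Proof.
  intros Hx. apply (is_derive_ext (fun x => gbase x ^ d)); [intros; now rewrite g_one|].
  unfold g_slope, gbase. auto_derive; [lra|].
  replace (x * (x * 1)) with (x ^ 2) by ring. unfold Rdiv.
  set (p := ((1 + x + x ^ 2) * / (2 + x)) ^ pred d). field. lra.
Qed.

Lemma gbase_pos x : 0 <= x -> 0 < gbase x.
Proof. intros. unfold gbase. apply Rdiv_lt_0_compat; nra. Qed.

Lemma gbase_le x y : 0 <= x <= y -> gbase x <= gbase y.
Proof.
  intros Hxy. unfold gbase. apply Rdiv_le_cross; try lra.
  assert (0 <= (y - x) * (1 + 2 * (x + y) + x * y)) by (apply Rmult_le_pos; nra).
  nra.
Qed.

Definition g_slope_lower (d : nat) (x1 x2 : R) : R :=
  INR d * gbase x1 ^ pred d * ((1 + 4 * x1 + x1 ^ 2) / (2 + x2) ^ 2).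

Lemma g_slope_lower_le d x1 x2 x : 0 <= x1 <= x -> x <= x2 ->
  g_slope_lower d x1 x2 <= g_slope d x.
Proof.
  intros Hx1 Hx2. unfold g_slope_lower, g_slope. apply Rmult_le_compat.
  - apply Rmult_le_pos; [apply pos_INR|]. apply pow_le. left; apply gbase_pos; lra.
  - apply Rdiv_le_0_compat; nra.
  - apply Rmult_le_compat_l; [apply pos_INR|]. apply pow_incr.
    split; [left; apply gbase_pos|apply gbase_le]; lra.
  - apply Rdiv_le_cross; try nra. apply Rmult_le_compat; nra.
Qed.

Lemma g_one_at_1 d : g d 1 1 = 1.
Proof.
  rewrite g_one. unfold gbase. replace ((1 + 1 + 1 ^ 2) / (2 + 1)) with 1 by field.
  apply pow1.
Qed.

Lemma g_one_at_0_pos d : 0 < g d 1 0.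
Proof. rewrite g_one. apply pow_lt, gbase_pos. lra. Qed.

Lemma g_one_below_id_of_steep d x0 : 0 <= x0 < 1 ->
  (forall x, x0 <= x <= 1 -> 1 < g_slope d x) ->
  forall x, x0 <= x < 1 -> g d 1 x < x.
Proof.
  intros Hx0 Hsteep x Hx.
  assert (Hderive : forall t, x <= t <= 1 ->
            is_derive (fun t => g d 1 t - t) t (g_slope d t - 1)).
  { intros t Ht. apply (is_derive_minus (g d 1) (fun t => t));
      [apply is_derive_g_one; lra | apply (is_derive_id (K := R_AbsRing))]. }
  destruct (MVT_gen (fun t => g d 1 t - t) x 1 (fun t => g_slope d t - 1)) as [t [Ht Hmvt]];
    rewrite Rmin_left, Rmax_right in * by lra.
  - intros t Ht. apply Hderive. lra.
  - intros t Ht. apply (continuity_pt_of_is_derive _ t (g_slope d t - 1)), Hderive. lra.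
  - rewrite g_one_at_1 in Hmvt. pose proof (Hsteep t ltac:(lra)).
    assert (0 < (g_slope d t - 1) * (1 - x)) by (apply Rmult_lt_0_compat; lra). lra.
Qed.

Lemma c_g_spec d : (exists x, 0 < x < 1 /\ g d 1 x = x) ->
  0 < c_g d < 1 /\ g d 1 (c_g d) = c_g d.
Proof. apply (epsilon_spec (inhabits 0)). Qed.

Lemma c_g_lt d cd x0 : 0 < cd <= x0 -> x0 < 1 ->
  (forall x, cd <= x <= x0 -> g d 1 x < x) ->
  (forall x, x0 <= x <= 1 -> 1 < g_slope d x) ->
  0 < c_g d < cd.
Proof.
  intros Hcd Hx0 Hbelow Hsteep.
  assert (Hbelow' : forall x, cd <= x < 1 -> g d 1 x < x).
  { intros x Hx. destruct (Rle_or_lt x x0).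
    - apply Hbelow. lra.
    - apply (g_one_below_id_of_steep d x0); [lra|exact Hsteep|lra]. }
  destruct (Ranalysis5.IVT_interv (fun t => t - g d 1 t) 0 x0) as [z [Hz Hgz]].
  - intros t Ht. apply (continuity_pt_of_is_derive _ t (1 - g_slope d t)).
    apply (is_derive_minus (fun t => t) (g d 1));
      [apply (is_derive_id (K := R_AbsRing)) | apply is_derive_g_one; lra].
  - lra.
  - pose proof (g_one_at_0_pos d). lra.
  - pose proof (Hbelow' x0 ltac:(lra)). lra.
  - assert (Hz0 : z <> 0) by (intros ->; pose proof (g_one_at_0_pos d); lra).
    destruct (c_g_spec d) as [Hcg Hfix]; [exists z; split; lra|].
    split; [lra|]. destruct (Rlt_or_le (c_g d) cd) as [H|H]; [exact H|].
    pose proof (Hbelow' (c_g d) ltac:(lra)). lra.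
Qed.

(** * Certified bounds in rational arithmetic *)

Fixpoint Qpow (q : Q) (n : nat) : Q :=
  match n with O => 1%Q | S n => (q * Qpow q n)%Q end.

Definition Q_of_nat (n : nat) : Q := inject_Z (Z.of_nat n).

Lemma Q2R_Qpow q n : Q2R (Qpow q n) = Q2R q ^ n.
Proof. induction n as [|n IH]; simpl; [apply RMicromega.Q2R_1|now rewrite Q2R_mult, IH]. Qed.

Lemma Q2R_div_total x y : Q2R (x / y) = Q2R x / Q2R y.
Proof.
  unfold Qdiv. rewrite Q2R_mult, RMicromega.Q2R_inv_ext.
  destruct (Qeq_bool y 0) eqn:Hy; [|reflexivity].
  apply Qeq_bool_eq, Qeq_eqR in Hy. rewrite Hy, RMicromega.Q2R_0, Rdiv_0_r. ring.
Qed.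

Lemma Q2R_Qred q : Q2R (Qred q) = Q2R q.
Proof. apply Qeq_eqR, Qred_correct. Qed.

Lemma Q2R_2 : Q2R 2 = 2.
Proof. unfold Q2R. simpl. field. Qed.

Lemma Q2R_Q_of_nat n : Q2R (Q_of_nat n) = INR n.
Proof. unfold Q_of_nat, Q2R. simpl. rewrite INR_IZR_INZ. field. Qed.

Lemma Q2R_99_100 : Q2R (99 # 100) = 99 / 100.
Proof. unfold Q2R. simpl. field. Qed.

Lemma Qle_bool_false_lt x y : Qle_bool x y = false -> Q2R y < Q2R x.
Proof.
  intros H. apply Qlt_Rlt, Qnot_le_lt. intros Hle. apply Qle_bool_iff in Hle. congruence.
Qed.

Hint Rewrite Q2R_plus Q2R_minus Q2R_mult Q2R_div_total Q2R_Qpow Q2R_Qred Q2R_2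
  Q2R_Q_of_nat RMicromega.Q2R_0 RMicromega.Q2R_1 : Q2R.

Definition fbaseQ (alpha x : Q) : Q := Qred ((1 + alpha * x) / (1 + 2 * x)).

Definition slope_boundQ (d : nat) (aL aU xL : Q) : Q :=
  Q_of_nat d * Qpow (fbaseQ aU xL) (pred d) * ((2 - aL) / Qpow (1 + 2 * xL) 2).

Definition fcomp_slope_boundQ (d : nat) (aL aU bL bU xL xU : Q) : Q :=
  slope_boundQ d aL aU (Qpow (fbaseQ bL xU) d) * slope_boundQ d bL bU xL.

Lemma Q2R_fbaseQ alpha x : Q2R (fbaseQ alpha x) = fbase (Q2R alpha) (Q2R x).
Proof. unfold fbaseQ, fbase. now autorewrite with Q2R. Qed.

Hint Rewrite Q2R_fbaseQ : Q2R.

Lemma Q2R_fcomp_slope_boundQ d aL aU bL bU xL xU :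
  Q2R (fcomp_slope_boundQ d aL aU bL bU xL xU) =
  fcomp_slope_bound d (Q2R aL) (Q2R aU) (Q2R bL) (Q2R bU) (Q2R xL) (Q2R xU).
Proof.
  unfold fcomp_slope_boundQ, slope_boundQ, fcomp_slope_bound, slope_bound.
  now autorewrite with Q2R.
Qed.

Definition gbaseQ (x : Q) : Q := Qred ((1 + x + Qpow x 2) / (2 + x)).

Lemma Q2R_gbaseQ x : Q2R (gbaseQ x) = gbase (Q2R x).
Proof. unfold gbaseQ, gbase. now autorewrite with Q2R. Qed.

Hint Rewrite Q2R_gbaseQ : Q2R.

Definition g_slope_lowerQ (d : nat) (x1 x2 : Q) : Q :=
  Q_of_nat d * Qpow (gbaseQ x1) (pred d) * ((1 + 4 * x1 + Qpow x1 2) / Qpow (2 + x2) 2).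

Lemma Q2R_g_slope_lowerQ d x1 x2 :
  Q2R (g_slope_lowerQ d x1 x2) = g_slope_lower d (Q2R x1) (Q2R x2).
Proof.
  unfold g_slope_lowerQ, g_slope_lower. autorewrite with Q2R.
  replace (Q2R 4) with 4 by (unfold Q2R; simpl; field). reflexivity.
Qed.

Fixpoint bisect (ok : Q -> Q -> Q -> Q -> bool) (n : nat) (c1 c2 x1 x2 : Q) : bool :=
  if ok c1 c2 x1 x2 then true else
  match n with
  | O => false
  | S n =>
      if Qle_bool (x2 - x1) (c2 - c1) then
        let m := Qred ((c1 + c2) / 2) in
        if bisect ok n c1 m x1 x2 then bisect ok n m c2 x1 x2 else false
      else
        let m := Qred ((x1 + x2) / 2) in
        if bisect ok n c1 c2 x1 m then bisect ok n c1 c2 m x2 else false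
  end.

Lemma bisect_sound (ok : Q -> Q -> Q -> Q -> bool) (P : R -> R -> Prop) :
  (forall c1 c2 x1 x2, ok c1 c2 x1 x2 = true -> forall c x,
     Q2R c1 <= c <= Q2R c2 -> Q2R x1 <= x <= Q2R x2 -> P c x) ->
  forall n c1 c2 x1 x2, bisect ok n c1 c2 x1 x2 = true -> forall c x,
     Q2R c1 <= c <= Q2R c2 -> Q2R x1 <= x <= Q2R x2 -> P c x.
Proof.
  intros Hok n. induction n as [|n IH]; intros c1 c2 x1 x2 H c x Hc Hx; cbn [bisect] in H;
    destruct (ok c1 c2 x1 x2) eqn:Hbox; try (now eapply Hok; eauto).
  destruct (Qle_bool _ _).
  - destruct (bisect ok n c1 _ x1 x2) eqn:Hlow; [|discriminate].
    destruct (Rle_or_lt c (Q2R (Qred ((c1 + c2) / 2)))).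
    + apply (IH _ _ _ _ Hlow); lra.
    + apply (IH _ _ _ _ H); lra.
  - destruct (bisect ok n c1 c2 x1 _) eqn:Hlow; [|discriminate].
    destruct (Rle_or_lt x (Q2R (Qred ((x1 + x2) / 2)))).
    + apply (IH _ _ _ _ Hlow); lra.
    + apply (IH _ _ _ _ H); lra.
Qed.

(* The dummy [c]-interval has width [0], so only [x] is ever split. *)
Definition bisect1 (ok : Q -> Q -> bool) (n : nat) (x1 x2 : Q) : bool :=
  bisect (fun _ _ => ok) n 0 0 x1 x2.

Lemma bisect1_sound (ok : Q -> Q -> bool) (P : R -> Prop) :
  (forall x1 x2, ok x1 x2 = true -> forall x, Q2R x1 <= x <= Q2R x2 -> P x) ->
  forall n x1 x2, bisect1 ok n x1 x2 = true -> forall x, Q2R x1 <= x <= Q2R x2 -> P x.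
Proof.
  intros Hok n x1 x2 H x Hx.
  apply (bisect_sound (fun _ _ => ok) (fun _ => P)) with n 0%Q 0%Q x1 x2 0; try easy.
  - intros c1 c2 y1 y2 Hbox c y _. now apply Hok.
  - rewrite RMicromega.Q2R_0. lra.
Qed.

Definition fcomp_box_ok (d : nat) (aL aU bL bU xL xU : Q) : bool :=
  Qle_bool 0 aL && Qle_bool aU 2 && Qle_bool 0 bL && Qle_bool bU 2 && Qle_bool 0 xL &&
  Qle_bool (fcomp_slope_boundQ d aL aU bL bU xL xU) (99 # 100).

Lemma fcomp_box_ok_sound d aL aU bL bU xL xU :
  fcomp_box_ok d aL aU bL bU xL xU = true -> forall a b x,
  Q2R aL <= a <= Q2R aU -> Q2R bL <= b <= Q2R bU -> Q2R xL <= x <= Q2R xU ->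
  Rabs (fcomp_slope d a b x) <= 99 / 100.
Proof.
  unfold fcomp_box_ok. intros Hbox a b x Ha Hb Hx.
  repeat match type of Hbox with
         | _ && _ = true => apply andb_prop in Hbox as [Hbox ?]
         end.
  repeat match goal with H : Qle_bool _ _ = true |- _ => apply RMicromega.Qle_true in H end.
  autorewrite with Q2R in *. rewrite Q2R_fcomp_slope_boundQ, Q2R_99_100 in *.
  eapply Rle_trans; [apply Rabs_fcomp_slope_le|eassumption]; lra.
Qed.

Definition g_below_id_box_ok (d : nat) (x1 x2 : Q) : bool :=
  Qle_bool 0 x1 && negb (Qle_bool x1 (Qpow (gbaseQ x2) d)).

Lemma g_below_id_box_ok_sound d x1 x2 :
  g_below_id_box_ok d x1 x2 = true -> forall x, Q2R x1 <= x <= Q2R x2 -> g d 1 x < x.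
Proof.
  unfold g_below_id_box_ok. intros Hbox x Hx.
  apply andb_prop in Hbox as [Hx1 Hlt]. apply negb_true_iff, Qle_bool_false_lt in Hlt.
  apply RMicromega.Qle_true in Hx1. autorewrite with Q2R in *.
  rewrite g_one. apply Rle_lt_trans with (gbase (Q2R x2) ^ d); [|lra].
  apply pow_incr. split; [left; apply gbase_pos|apply gbase_le]; lra.
Qed.

Definition g_steep_box_ok (d : nat) (x1 x2 : Q) : bool :=
  Qle_bool 0 x1 && negb (Qle_bool (g_slope_lowerQ d x1 x2) 1).

Lemma g_steep_box_ok_sound d x1 x2 :
  g_steep_box_ok d x1 x2 = true -> forall x, Q2R x1 <= x <= Q2R x2 -> 1 < g_slope d x.
Proof.
  unfold g_steep_box_ok. intros Hbox x Hx.
  apply andb_prop in Hbox as [Hx1 Hlt]. apply negb_true_iff, Qle_bool_false_lt in Hlt.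
  apply RMicromega.Qle_true in Hx1. autorewrite with Q2R in *.
  rewrite Q2R_g_slope_lowerQ in Hlt.
  apply (Rlt_le_trans _ _ _ Hlt), g_slope_lower_le; lra.
Qed.

Definition admissible_radius (d : nat) (cd : R) : Prop :=
  0 < c_g d < cd /\ cd < 1 /\
  (forall c x, 0 <= c <= cd -> 0 <= x <= 1 -> Rabs (fcomp_slope d 1 (1 + c) x) <= 99 / 100) /\
  (forall c x, 0 <= c <= cd -> 0 <= x <= 1 -> Rabs (fcomp_slope d (1 + c) 1 x) <= 99 / 100).

Lemma admissible_radius_of_bisect d (cdQ x0Q : Q) n :
  (0 < cdQ)%Q -> (cdQ <= x0Q)%Q -> (x0Q < 1)%Q ->
  bisect (fun c1 c2 x1 x2 => fcomp_box_ok d 1 1 (1 + c1) (1 + c2) x1 x2) n 0 cdQ 0 1 = true ->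
  bisect (fun c1 c2 x1 x2 => fcomp_box_ok d (1 + c1) (1 + c2) 1 1 x1 x2) n 0 cdQ 0 1 = true ->
  bisect1 (g_below_id_box_ok d) n cdQ x0Q = true ->
  bisect1 (g_steep_box_ok d) n x0Q 1 = true ->
  admissible_radius d (Q2R cdQ).
Proof.
  intros Hcd0 Hcdx0 Hx0 Hi Hj Hbelow Hsteep.
  apply Qlt_Rlt in Hcd0, Hx0. apply Qle_Rle in Hcdx0. autorewrite with Q2R in *.
  split; [|split; [lra|split]].
  - apply (c_g_lt d (Q2R cdQ) (Q2R x0Q)); try lra; intros x Hx.
    + apply (bisect1_sound _ _ (g_below_id_box_ok_sound d) n cdQ x0Q Hbelow x Hx).
    + apply (bisect1_sound _ _ (g_steep_box_ok_sound d) n x0Q 1 Hsteep).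
      now rewrite RMicromega.Q2R_1.
  - intros c x Hc Hx.
    refine (bisect_sound _ (fun c x => Rabs (fcomp_slope d 1 (1 + c) x) <= 99 / 100)
              _ n 0 cdQ 0 1 Hi c x _ _); [|autorewrite with Q2R; lra ..].
    intros c1 c2 x1 x2 Hbox c' x' Hc' Hx'.
    apply (fcomp_box_ok_sound _ _ _ _ _ _ _ Hbox); autorewrite with Q2R; lra.
  - intros c x Hc Hx.
    refine (bisect_sound _ (fun c x => Rabs (fcomp_slope d (1 + c) 1 x) <= 99 / 100)
              _ n 0 cdQ 0 1 Hj c x _ _); [|autorewrite with Q2R; lra ..].
    intros c1 c2 x1 x2 Hbox c' x' Hc' Hx'.
    apply (fcomp_box_ok_sound _ _ _ _ _ _ _ Hbox); autorewrite with Q2R; lra.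
Qed.

Lemma admissible_radius_exists d : (2 <= d <= 7)%nat -> exists cd, admissible_radius d cd.
Proof.
  intros Hd.
  (* The radii, the splitting points [x_0] and the depth were found numerically. *)
  assert (Hcases : d = 2%nat \/ d = 3%nat \/ d = 4%nat \/ d = 5%nat \/ d = 6%nat \/ d = 7%nat)
    by lia.
  destruct Hcases as [-> | [-> | [-> | [-> | [-> | ->]]]]]; eexists.
  - apply (admissible_radius_of_bisect 2 (3 # 5) (3 # 4) 30); vm_compute; easy.
  - apply (admissible_radius_of_bisect 3 (1 # 4) (41 # 64) 30); vm_compute; easy.
  - apply (admissible_radius_of_bisect 4 (1 # 8) (5 # 8) 30); vm_compute; easy.
  - apply (admissible_radius_of_bisect 5 (1 # 16) (41 # 64) 30); vm_compute; easy.
  - apply (admissible_radius_of_bisect 6 (1 # 32) (21 # 32) 30); vm_compute; easy.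
  - apply (admissible_radius_of_bisect 7 (1 # 32) (43 # 64) 30); vm_compute; easy.
Qed.

Theorem lemma6p3 (d : nat) (hd : (2 <= d <= 7)%nat) :
  exists cd : R, 0 < c_g d < cd /\
  forall c : R, 0 <= c < cd ->
    exists a b : R,
      (* unique fixed points in (0,1) *)
      (0 < a < 1 /\ fi d c a = a /\
         forall y, 0 < y < 1 -> fi d c y = y -> y = a) /\
      (0 < b < 1 /\ fj d c b = b /\
         forall y, 0 < y < 1 -> fj d c y = y -> y = b) /\
      (* derivative bounds on [0,1] *)
      (forall x, 0 <= x <= 1 ->
         exists l, is_derive (fi d c) x l /\ Rabs l < 1) /\
      (forall x, 0 <= x <= 1 ->
         exists l, is_derive (fj d c) x l /\ Rabs l < 1) /\
      (* global convergence of iterates *)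
      (forall x, 0 <= x <= 1 ->
         is_lim_seq (fun n => Nat.iter n (fi d c) x) a) /\
      (forall x, 0 <= x <= 1 ->
         is_lim_seq (fun n => Nat.iter n (fj d c) x) b) /\
      (* sign of i(c,x) - x and j(c,x) - x *)
      (forall x, 0 <= x <= 1 -> (fi d c x > x <-> 0 <= x < a)) /\
      (forall x, 0 <= x <= 1 -> (fj d c x > x <-> 0 <= x < b)).
Proof.
  destruct (admissible_radius_exists d hd) as (cd & Hcg & Hcd & Hslope_i & Hslope_j).
  exists cd. split; [exact Hcg|]. intros c Hc.
  destruct (fcomp_contraction d 1 (1 + c) (99 / 100)) as (a & Ha);
    [lia|lra|lra|lra|intros x Hx; apply Hslope_i; lra|].
  destruct (fcomp_contraction d (1 + c) 1 (99 / 100)) as (b & Hb);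
    [lia|lra|lra|lra|intros x Hx; apply Hslope_j; lra|].
  exists a, b. tauto.
Qed.
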